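(* Let $n\ge1$, $\sigma\in\mathcal{S}_n$, $\epsilon\in\mathbb{R}$, and let $F_1,\dots,F_{n+1}$ be real numbers. Assign to each index $i\in\{1,\dots,n+1\}$ a label in $\{Q,P\}$: index $1$ has label $Q$, index $n+1$ has label $P$, and for $1<i\le n$ index $i$ has label $Q$ if $\sigma(i)>\sigma(i-1)$ and $P$ otherwise. For $k=1,\dots,n$ define $X_\sigma(k)=k\epsilon+\imath\big(F_{\sigma^{-1}(n)}+\dots+F_{\sigma^{-1}(n-k+1)}-F_{\sigma^{-1}(n)+1}-\dots-F_{\sigma^{-1}(n-k+1)+1}\big)$. Then for every $k\in\{1,\dots,n\}$, every index in $S^<_\sigma(n-k+1)$ has label $Q$, every index in $S^>_\sigma(n-k+1)$ has label $P$, and $X_\sigma(k)=k\epsilon+\imath\sum_{j\in S^<_\sigma(n-k+1)}F_j-\imath\sum_{j\in S^>_\sigma(n-k+1)}F_j$.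
   Context: Let $\bar\sigma=(\bar\sigma(1),\dots,\bar\sigma(n+2))=(0,\sigma(1),\dots,\sigma(n),0)$. For $m\in\{1,\dots,n\}$, $S^<_\sigma(m)=\{i:1\le i\le n+1,\ \bar\sigma(i)<m\le\bar\sigma(i+1)\}$ and $S^>_\sigma(m)=\{i:1\le i\le n+1,\ \bar\sigma(i)\ge m>\bar\sigma(i+1)\}$. *)

(* Indices are 1-based natural numbers as in the paper. *)
From HB Require Import structures.
From mathcomp Require Import all_boot all_order all_algebra all_fingroup.
From mathcomp Require Import complex.
Set Implicit Arguments. Unset Strict Implicit. Unset Printing Implicit Defensive.
Import Order.TTheory GRing.Theory Num.Theory.

Section Defs.
Variable n : nat.
Variable s : 'S_n.

(* sigma(i) for 1 <= i <= n, values in {1..n} (0 outside the range) *)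
Definition sig1 (i : nat) : nat :=
  if (1 <= i)%N then
    (if @insub nat (fun m => m < n)%N 'I_n i.-1 is Some o then (s o).+1 else 0)
  else 0.

Definition siginv1 (j : nat) : nat :=
  if (1 <= j)%N then
    (if @insub nat (fun m => m < n)%N 'I_n j.-1 is Some o then ((s^-1)%g o).+1 else 0)
  else 0.

(* bar sigma = (0, sigma(1), ..., sigma(n), 0), indexed 1..n+2 *)
Definition sbar (i : nat) : nat :=
  if (2 <= i <= n.+1) then sig1 i.-1 else 0.

Definition Slt (m : nat) : seq nat :=
  [seq i <- iota 1 n.+1 | (sbar i < m) && (m <= sbar i.+1)].

Definition Sgt (m : nat) : seq nat :=
  [seq i <- iota 1 n.+1 | (m <= sbar i) && (sbar i.+1 < m)].

Inductive label := LQ | LP.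

Definition label_of (i : nat) : label :=
  if i == 1 then LQ
  else if i == n.+1 then LP
  else if sig1 i.-1 < sig1 i then LQ else LP.

Local Open Scope ring_scope.
Local Open Scope complex_scope.

Definition Xsig (R : rcfType) (eps : R) (F : nat -> R) (k : nat) : R[i] :=
  (k%:R * eps)%:C
  + 'i * ((\sum_(n - k + 1 <= l < n.+1) F (siginv1 l))
          - (\sum_(n - k + 1 <= l < n.+1) F (siginv1 l).+1))%:C.
End Defs.

(** A level [l >= m] is attained at the position [p = σ^{-1}(l)], so summing
    [F] over the positions [σ^{-1}(l)] (resp. [σ^{-1}(l)+1]) with [l >= m]
    counts [F j] once for every [j] with [σ̄(j+1) >= m] (resp. [σ̄(j) >= m]).
    In the difference, [F j] survives exactly when the walk [σ̄] crosses the
    level [m] between [j] and [j+1]: upwards for [j ∈ S^<(m)], downwards for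
    [j ∈ S^>(m)].  An upward step [σ̄(j) < σ̄(j+1)] is precisely label [Q]. *)

From HB Require Import structures.
From mathcomp Require Import all_boot all_order all_algebra all_fingroup.
From mathcomp Require Import complex.
From mathcomp Require Import zify.
Import Order.TTheory GRing.Theory Num.Theory.
Local Open Scope ring_scope.
Local Open Scope complex_scope.

Section WalkOfPermutation.
Variables (n : nat) (s : 'S_n).

Lemma sig1_ord (o : 'I_n) : sig1 s o.+1 = (s o).+1.
Proof.
rewrite /sig1 /=; case: insubP => [u _ Hu|]; last by rewrite ltn_ord.
by have -> : u = o by apply: val_inj.
Qed.

Lemma siginv1_ord (o : 'I_n) : siginv1 s o.+1 = ((s^-1)%g o).+1.
Proof.
rewrite /siginv1 /=; case: insubP => [u _ Hu|]; last by rewrite ltn_ord.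
by have -> : u = o by apply: val_inj.
Qed.

Lemma sbar_ord (o : 'I_n) : sbar s o.+2 = (s o).+1.
Proof. by rewrite /sbar /= ltnS (ltn_ord o) sig1_ord. Qed.

Lemma sbar1 : sbar s 1 = 0%N.
Proof. by []. Qed.

Lemma sbar_last : sbar s n.+2 = 0%N.
Proof. by rewrite /sbar ltnn andbF. Qed.

Lemma sbar_gt0 i : (2 <= i <= n.+1)%N -> (0 < sbar s i)%N.
Proof.
case: i => [|[|i]] //; rewrite !ltnS => /andP [_ lt_i_n].
by rewrite (sbar_ord (Ordinal lt_i_n)).
Qed.

Lemma label_of_sbar i : (0 < n)%N -> (1 <= i <= n.+1)%N ->
  label_of s i = if (sbar s i < sbar s i.+1)%N then LQ else LP.
Proof.
move=> n_gt0 /andP [i_gt0 i_le]; rewrite /label_of.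
have [-> | i_neq1] := eqVneq i 1%N; first by rewrite sbar1 sbar_gt0 //= ltnS.
have [-> | i_neqn1] := eqVneq i n.+1; first by rewrite sbar_last ltn0.
have i_mid : (2 <= i <= n.+1)%N by lia.
have i1_mid : (2 <= i.+1 <= n.+1)%N by lia.
by rewrite /sbar i_mid i1_mid.
Qed.

Lemma mem_Slt m i :
  (i \in Slt s m) = [&& (sbar s i < m)%N, (m <= sbar s i.+1)%N & (1 <= i <= n.+1)%N].
Proof. by rewrite mem_filter mem_iota add1n ltnS -andbA. Qed.

Lemma mem_Sgt m i :
  (i \in Sgt s m) = [&& (m <= sbar s i)%N, (sbar s i.+1 < m)%N & (1 <= i <= n.+1)%N].
Proof. by rewrite mem_filter mem_iota add1n ltnS -andbA. Qed.

Lemma label_Slt m i : (0 < n)%N -> i \in Slt s m -> label_of s i = LQ.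
Proof.
move=> n_gt0; rewrite mem_Slt => /and3P [lt_m le_m i_range].
by rewrite label_of_sbar // (leq_trans lt_m le_m).
Qed.

Lemma label_Sgt m i : (0 < n)%N -> i \in Sgt s m -> label_of s i = LP.
Proof.
move=> n_gt0; rewrite mem_Sgt => /and3P [le_m lt_m i_range].
by rewrite label_of_sbar // ltnNge ltnW // (leq_trans lt_m le_m).
Qed.

Variable V : zmodType.

Lemma sum_levels_positions m (H : nat -> V) : (0 < m)%N ->
  \sum_(m <= l < n.+1) H (siginv1 s l) =
  \sum_(p <- iota 1 n) (if (m <= sbar s p.+1)%N then H p else 0).
Proof.
move=> m_gt0.
rewrite big_geq_mkord big_mkcond big_ord_recl /= leqNgt m_gt0 add0r.
have -> : iota 1 n = map succn (index_iota 0 n).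
  by rewrite /index_iota subn0 -(iotaDl 1).
rewrite big_map big_mkord.
rewrite (reindex_inj (@perm_inj _ s)) /=.
by apply: eq_bigr => i _; rewrite /bump /= add1n siginv1_ord sbar_ord permK.
Qed.

Lemma sum_levels_Slt_Sgt m (F : nat -> V) : (0 < m)%N ->
  \sum_(m <= l < n.+1) F (siginv1 s l) - \sum_(m <= l < n.+1) F (siginv1 s l).+1
  = \sum_(j <- Slt s m) F j - \sum_(j <- Sgt s m) F j.
Proof.
move=> m_gt0.
rewrite (sum_levels_positions _ F) // (sum_levels_positions _ (fun p => F p.+1)) //.
have -> : \sum_(p <- iota 1 n) (if (m <= sbar s p.+1)%N then F p else 0)
        = \sum_(j <- iota 1 n.+1) (if (m <= sbar s j.+1)%N then F j else 0).
  rewrite -[in RHS](addn1 n) iotaD big_cat big_seq1 add1n sbar_last.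
  by rewrite leqNgt m_gt0 /= addr0.
have -> : \sum_(p <- iota 1 n) (if (m <= sbar s p.+1)%N then F p.+1 else 0)
        = \sum_(j <- iota 1 n.+1) (if (m <= sbar s j)%N then F j else 0).
  rewrite -[iota 1 n.+1]/(1 :: iota (1 + 1) n) big_cons sbar1 leqNgt m_gt0 add0r.
  by rewrite iotaDl big_map.
rewrite /Slt /Sgt !big_filter (big_mkcond (fun j => (sbar s j < m)%N && _))
  (big_mkcond (fun j => (m <= sbar s j)%N && _)) -!sumrB.
apply: eq_bigr => j _; rewrite ltnNge [(sbar s j.+1 < m)%N]ltnNge.
by case: (m <= sbar s j)%N; case: (m <= sbar s j.+1)%N; rewrite /= ?subrr ?subr0.
Qed.

End WalkOfPermutation.

Theorem lemma4 (R : rcfType) (n : nat) (s : 'S_n) (eps : R) (F : nat -> R) :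
  (1 <= n)%N ->
  forall k : nat, (1 <= k <= n)%N ->
    (forall i, i \in Slt s (n - k + 1) -> label_of s i = LQ) /\
    (forall i, i \in Sgt s (n - k + 1) -> label_of s i = LP) /\
    Xsig s eps F k =
      (k%:R * eps)%:C + 'i * (\sum_(j <- Slt s (n - k + 1)) F j)%:C
                      - 'i * (\sum_(j <- Sgt s (n - k + 1)) F j)%:C.
Proof.
move=> n_gt0 k _.
split; first by move=> i; apply: label_Slt.
split; first by move=> i; apply: label_Sgt.
rewrite /Xsig sum_levels_Slt_Sgt ?addn1 //.
by rewrite (rmorphB (real_complex R)) mulrBr addrA.
Qed.
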